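(* Let $q$ be a power of $2$, $\beta$ a primitive element of $\mathbb{F}_{q^2}$, $\mathrm{Tr}(x)=x+x^q$, and $\Psi:\mathbb{F}_{q^2}^n\to\mathbb{F}_q^{2n}$, $\Psi(\alpha_0,\ldots,\alpha_{n-1})=\left(\mathrm{Tr}(\beta\alpha_0),\ldots,\mathrm{Tr}(\beta\alpha_{n-1}),\mathrm{Tr}(\beta^q\alpha_0),\ldots,\mathrm{Tr}(\beta^q\alpha_{n-1})\right)$. Let $g(x)\in\mathbb{F}_q[x]$ be a monic divisor of $x^{2n}-1$ with $g(x)\neq x^{2n}-1$ and $k=\deg g$, $\mathscr{D}=\langle g(x)\rangle$ the $q$-ary linear cyclic code of length $2n$ it generates, and $\mathscr{C}=\Psi^{-1}(\mathscr{D})$. Let $h(x)=(x^{2n}-1)/g(x)=h_0+\cdots+h_{2n-k}x^{2n-k}$, $h^*(x)=\frac{1}{h_{2n-k}}x^{2n-k}h(1/x)$, $V_{h^*(x)}\in\mathbb{F}_q^{2n}$ its coefficient vector, and $W_{h^{\epsilon}(x)}=\Psi^{-1}(\tau(V_{h^*(x)}))\in\mathbb{F}_{q^2}^n$. Then the $k$ vectors $W_{h^{\epsilon}(x)},T(W_{h^{\epsilon}(x)}),\ldots,T^{k-1}(W_{h^{\epsilon}(x)})$ form an $\mathbb{F}_q$-basis of the alternating dual $\mathscr{C}^{\perp_a}$.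
   Context: $\sigma(v_0,\ldots,v_{2n-1})=(v_{2n-1},v_0,\ldots,v_{2n-2})$, $\tau(v_0,\ldots,v_{2n-1})=(-v_n,\ldots,-v_{2n-1},v_0,\ldots,v_{n-1})$, and $T(c_0,\ldots,c_{n-1})=(c_{n-1}^q,c_0,\ldots,c_{n-2})$. The alternating inner product on $\mathbb{F}_{q^2}^n$ is $\langle u,v\rangle_a=(\beta^{2q}-\beta^2)\sum_{i=0}^{n-1}(u_iv_i^q-u_i^qv_i)$ and $\mathscr{C}^{\perp_a}=\{v\in\mathbb{F}_{q^2}^n:\langle u,v\rangle_a=0\ \forall u\in\mathscr{C}\}$. *)

From mathcomp Require Import all_boot all_order all_algebra all_field.
Set Implicit Arguments. Unset Strict Implicit. Unset Printing Implicit Defensive.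
Import GRing.Theory.
Local Open Scope ring_scope.

Section Defs.
Variable F : finFieldType.   (* plays the role of F_{q^2} *)
Variable q : nat.

Definition Fq : {pred F} := fun x => x ^+ q == x.

Definition Tr (x : F) : F := x + x ^+ q.

Definition Psi (beta : F) (n : nat) (a : 'rV[F]_n) : 'rV[F]_(n + n) :=
  row_mx (\row_j Tr (beta * a 0 j)) (\row_j Tr (beta ^+ q * a 0 j)).

Definition tau (n : nat) (v : 'rV[F]_(n + n)) : 'rV[F]_(n + n) :=
  row_mx (- rsubmx v) (lsubmx v).

Definition Tmap (n : nat) (c : 'rV[F]_n) : 'rV[F]_n :=
  \row_(i < n) (if (i : nat) == 0%N then (c 0 (ord_pred i)) ^+ q
                else c 0 (ord_pred i)).
(* ord_pred i is the cyclic predecessor: n-1 for i = 0, i-1 otherwise *)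

Definition cyclic_code (N : nat) (g : {poly F}) (c : 'rV[F]_N) : Prop :=
  (forall i, c 0 i \in Fq) /\
  exists a : {poly F}, a \is a polyOver Fq /\
    rVpoly c = (a * g) %% ('X^N - 1).

Definition alt_ip (beta : F) (n : nat) (u v : 'rV[F]_n) : F :=
  (beta ^+ (2 * q) - beta ^+ 2) *
  \sum_(i < n) (u 0 i * v 0 i ^+ q - u 0 i ^+ q * v 0 i).

Definition alt_dual (beta : F) (n : nat) (C : 'rV[F]_n -> Prop) (v : 'rV[F]_n) : Prop :=
  forall u, C u -> alt_ip beta u v = 0.

Definition recip (h : {poly F}) : {poly F} :=
  (lead_coef h)^-1 *: \poly_(i < size h) h`_((size h).-1 - i).

Definition Fq_basis (n k : nat) (w : 'I_k -> 'rV[F]_n) (P : 'rV[F]_n -> Prop) : Prop :=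
  (forall a : 'I_k -> F, (forall i, a i \in Fq) ->
      \sum_(i < k) a i *: w i = 0 -> forall i, a i = 0) /\
  (forall v, P v <-> exists a : 'I_k -> F, (forall i, a i \in Fq) /\
                       v = \sum_(i < k) a i *: w i).
End Defs.

From HB Require Import structures.
From mathcomp Require Import all_boot all_order all_algebra all_field.
From mathcomp Require Import zify ring.

Set Implicit Arguments.
Unset Strict Implicit.
Unset Printing Implicit Defensive.

Import GRing.Theory.
Local Open Scope ring_scope.

(** In characteristic 2 the map [tau] is the rotation by [n], and [Psi] is an
    [F_q]-linear bijection from [F^n] onto [F_q^(2n)].  Reading [tau (Psi w)]
    as a polynomial of degree [< 2n], the map [T] becomes multiplication by [x]
    (a cyclic shift) and the alternating form [<u, v>_a] becomes the coefficient
    pairing [sum_(l < 2n) f_l p_l] of [Psi u] with [tau (Psi v)].  The theorem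
    thus reduces to: the polynomials [p] of degree [< 2n] orthogonal to every
    multiple of [g] of degree [< 2n] are exactly the products [A h^*] with
    [deg A < k].  Such products are orthogonal because reversing indices turns
    the pairing into a coefficient of [c x^(k-1-i) (x^(2n) - 1)] that vanishes
    for degree reasons; conversely the remainder of [p] modulo [h^*] is
    orthogonal to the [x^j g], [j < 2n - k], a triangular system with diagonal
    [g_0 <> 0], so it is zero. *)

Section QFrobenius.
Variables (R : comNzRingType) (q : nat).
Hypothesis pcharRq : [pchar R].-nat q.

Definition qFrobenius of [pchar R].-nat q := fun x : R => x ^+ q.
Arguments qFrobenius : simpl never.

Fact qFrobenius_is_zmod_morphism : zmod_morphism (qFrobenius pcharRq).
Proof. by move=> x y; rewrite /qFrobenius exprDn_pchar // exprNn_pchar. Qed.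

Fact qFrobenius_is_monoid_morphism : monoid_morphism (qFrobenius pcharRq).
Proof. by split=> [|x y]; rewrite /qFrobenius ?expr1n ?exprMn. Qed.

HB.instance Definition _ := GRing.isZmodMorphism.Build R R (qFrobenius pcharRq)
  qFrobenius_is_zmod_morphism.
HB.instance Definition _ := GRing.isMonoidMorphism.Build R R (qFrobenius pcharRq)
  qFrobenius_is_monoid_morphism.

End QFrobenius.

Definition pdot (R : nzRingType) (N : nat) (f p : {poly R}) : R :=
  \sum_(l < N) f`_l * p`_l.

Lemma pdotBr (R : nzRingType) N (f p p' : {poly R}) :
  pdot N f (p - p') = pdot N f p - pdot N f p'.
Proof. by rewrite /pdot -sumrB; apply: eq_bigr => l _; rewrite coefB mulrBr. Qed.

Definition revp (R : nzRingType) (p : {poly R}) : {poly R} :=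
  \poly_(i < size p) p`_((size p).-1 - i).

Lemma rVpoly_sumXn (R : nzSemiRingType) d (v : 'rV[R]_d) :
  rVpoly v = \sum_(i < d) v 0 i *: 'X^i.
Proof. by rewrite /rVpoly poly_def; apply: eq_bigr => i _; rewrite valK. Qed.

Section DualOfCyclicCode.
Variables (R : fieldType) (N k : nat) (g : {poly R}).
Hypotheses (N_gt0 : (0 < N)%N) (g_monic : g \is monic) (size_g : size g = k.+1).
Hypothesis g_dvd : g %| 'X^N - 1.

Local Notation h := (('X^N - 1) %/ g).
Local Notation hs := (revp h).

Lemma k_leq_N : (k <= N)%N.
Proof.
have XN1_neq0 : 'X^N - 1 != 0 :> {poly R} by rewrite -size_poly_eq0 size_Xn_sub_1.
by have := dvdp_leq XN1_neq0 g_dvd; rewrite size_Xn_sub_1 // size_g.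
Qed.

Lemma size_h : size h = (N - k).+1.
Proof. by rewrite size_divp ?monic_neq0 // size_Xn_sub_1 // size_g subSn ?k_leq_N. Qed.

Lemma h_monic : h \is monic.
Proof. by rewrite -(monicMr h g_monic) divpK ?monic_Xn_sub_1. Qed.

Lemma coef0_h_mul_g : h`_0 * g`_0 = -1.
Proof.
have := congr1 (fun p : {poly R} => p`_0) (divpK g_dvd).
by rewrite /= coefM big_ord1 coefB coefXn coef1 eq_sym (gtn_eqF N_gt0) sub0r.
Qed.

Lemma coef0_g_neq0 : g`_0 != 0.
Proof.
by apply: contra_eqN coef0_h_mul_g => /eqP->; rewrite mulr0 eq_sym oppr_eq0 oner_eq0.
Qed.

Lemma coef0_h_neq0 : h`_0 != 0.
Proof.
by apply: contra_eqN coef0_h_mul_g => /eqP->; rewrite mul0r eq_sym oppr_eq0 oner_eq0.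
Qed.

Lemma coef_revp_h l : hs`_l = if (l <= N - k)%N then h`_(N - k - l) else 0.
Proof. by rewrite coef_poly size_h. Qed.

Lemma size_revp_h : size hs = (N - k).+1.
Proof. by rewrite size_poly_eq size_h // subnn coef0_h_neq0. Qed.

Lemma revp_h_neq0 : hs != 0.
Proof. by rewrite -size_poly_eq0 size_revp_h. Qed.

Lemma size_divp_revp_h (Y : {poly R}) : (size Y <= N)%N -> (size (Y %/ hs)%R <= k)%N.
Proof. by rewrite size_divp ?revp_h_neq0 // size_revp_h /= leq_subLR subnK ?k_leq_N. Qed.

Lemma coef_Xn_revp_h i l : (i < k)%N -> (l < N)%N ->
  ('X^i * hs)`_l = ('X^(k.-1 - i) * h)`_(N.-1 - l).
Proof.
move=> ik lN; have kN := k_leq_N.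
have h_eq0 t : (N - k < t)%N -> h`_t = 0 by move=> ?; rewrite nth_default ?size_h.
rewrite !coefXnM coef_revp_h; case: (ltnP l i) => li.
  by case: ltnP => // ?; rewrite h_eq0 //; lia.
case: leqP => ?; case: ltnP => ? //; try lia.
by congr (nth _ _ _); lia.
Qed.

(* Reversing indices turns the pairing into the coefficient of [X^(N-1)] in
   [c * X^(k-1-i) * (X^N - 1)], which vanishes since [size c <= N - k]. *)
Lemma pdot_Xn_revp_h f i : g %| f -> (size f <= N)%N -> (i < k)%N ->
  pdot N f ('X^i * hs) = 0.
Proof.
move=> /dvdpP[c ->] size_cg ik.
have size_c : (size c <= N - k)%N.
  have [->|c_neq0] := eqVneq c 0; first by rewrite size_poly0.
  by move: size_cg; rewrite size_Mmonic // size_g addnS /= leq_subRL ?k_leq_N // addnC.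
have -> : pdot N (c * g) ('X^i * hs) = (c * g * ('X^(k.-1 - i) * h))`_N.-1.
  by rewrite coefM prednK //; apply: eq_bigr => l _; rewrite coef_Xn_revp_h.
have -> : c * g * ('X^(k.-1 - i) * h) = c * 'X^(k.-1 - i) * (h * g) by ring.
rewrite divpK // mulrBr mulr1 -mulrA -exprD coefB !coefMXn.
case: ltnP => [_ | ?]; last lia.
case: ltnP => [? | _]; first by have := k_leq_N; lia.
by rewrite nth_default ?subr0 // (leq_trans size_c) //; lia.
Qed.

Lemma pdot_revp_h f (A : {poly R}) : g %| f -> (size f <= N)%N -> (size A <= k)%N ->
  pdot N f (A * hs) = 0.
Proof.
move=> gf sf /poly_rV_K <-; rewrite rVpoly_sumXn mulr_suml /pdot.
under eq_bigr do rewrite coef_sum mulr_sumr.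
rewrite exchange_big big1 // => i _.
under eq_bigr do rewrite -scalerAl coefZ mulrCA.
by rewrite -mulr_sumr [X in _ * X]pdot_Xn_revp_h ?mulr0.
Qed.

Lemma size_Xn_mul_g j : size ('X^j * g) = (j + k).+1.
Proof. by rewrite size_monicM ?monicXn ?monic_neq0 // size_polyXn size_g addnS. Qed.

Lemma pdot_Xn_g_lead (r : {poly R}) : (size r <= N)%N ->
  pdot N ('X^((size r).-1) * g) r = g`_0 * lead_coef r.
Proof.
move=> sr; have [->|r_neq0] := eqVneq r 0.
  by rewrite lead_coef0 mulr0 /pdot big1 // => l _; rewrite coef0 mulr0.
have dN : ((size r).-1 < N)%N by rewrite prednK ?size_poly_gt0.
rewrite /pdot (bigD1 (Ordinal dN)) //= coefXnM ltnn subnn big1 ?addr0 // => l.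
rewrite -val_eqE /= coefXnM => l_neq; case: ltnP => [_|le_l]; first by rewrite mul0r.
have r_gt0 : (0 < size r)%N by rewrite size_poly_gt0.
by rewrite [r`_l]nth_default ?mulr0 // -(prednK r_gt0) ltn_neqAle eq_sym l_neq.
Qed.

Lemma eq0_of_pdot_Xn_g (r : {poly R}) : (size r <= N - k)%N ->
  (forall j, (j < N - k)%N -> pdot N ('X^j * g) r = 0) -> r = 0.
Proof.
move=> sr orth; apply/eqP; apply: contraT => r_neq0.
have r_gt0 : (0 < size r)%N by rewrite size_poly_gt0.
have := orth _ (leq_trans (eq_leq (prednK r_gt0)) sr).
rewrite pdot_Xn_g_lead ?(leq_trans sr (leq_subr _ _)) //.
by move/eqP; rewrite mulf_eq0 (negbTE coef0_g_neq0) lead_coef_eq0 (negbTE r_neq0).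
Qed.

Lemma revp_h_divpK (Y : {poly R}) : (size Y <= N)%N ->
  (forall j, (j < N - k)%N -> pdot N ('X^j * g) Y = 0) -> Y %/ hs * hs = Y.
Proof.
move=> sY orth; suff mod0 : Y %% hs = 0 by rewrite [RHS](divp_eq Y hs) mod0 addr0.
apply: eq0_of_pdot_Xn_g => [|j jNk].
  by have := ltn_modp Y hs; rewrite revp_h_neq0 size_revp_h ltnS; apply.
rewrite -[Y %% hs](addKr (Y %/ hs * hs)) -divp_eq addrC pdotBr orth //.
rewrite pdot_revp_h ?subr0 ?size_divp_revp_h ?dvdp_mull //.
by rewrite size_Xn_mul_g; lia.
Qed.

End DualOfCyclicCode.

Lemma recip_monic (F : finFieldType) (p : {poly F}) : p \is monic -> recip p = revp p.
Proof. by move/monicP; rewrite /recip => ->; rewrite invr1 scale1r. Qed.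

Lemma polyOver_revp (R : nzRingType) (S : addrClosed R) (p : {poly R}) :
  p \is a polyOver S -> revp p \is a polyOver S.
Proof. by move/polyOverP => Sp; apply: polyOver_poly => i _. Qed.

Section Fq2.
Variables (F : finFieldType) (q m : nat).
Hypotheses (hq : q = (2 ^ m)%N) (hF : #|F| = (q ^ 2)%N).

Local Notation Fq := (@Fq F q).
Local Notation Tr := (@Tr F q).

Lemma pchar2 : 2 \in [pchar F].
Proof. by apply: (@card_finPcharP _ _ (m * 2)); rewrite // hF hq -expnM. Qed.

Lemma pchar_nat_q : [pchar F].-nat q.
Proof. by rewrite hq pnatX (eq_pnat _ (pcharf_eq pchar2)) pnat_id. Qed.

Local Notation fr := (qFrobenius pchar_nat_q).

Lemma frobK : involutive fr.
Proof. by move=> x; rewrite /qFrobenius -exprM mulnn -hF expf_card. Qed.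

Lemma FqE x : (x \in Fq) = (fr x == x).
Proof. by []. Qed.

Fact Fq_divring_closed : divring_closed Fq.
Proof.
split=> [|x y|x y]; rewrite !FqE ?rmorph1 // => /eqP fx /eqP fy.
  by rewrite rmorphB /= fx fy.
by rewrite fmorph_div /= fx fy.
Qed.

HB.instance Definition _ := GRing.isDivringClosed.Build F Fq Fq_divring_closed.

Lemma polyOver_FqE (p : {poly F}) : (p \is a polyOver Fq) = (map_poly fr p == p).
Proof.
apply/polyOverP/eqP => [Fp | fp i]; last by rewrite FqE -{2}fp coef_map.
by apply/polyP => i; rewrite coef_map; apply/eqP/Fp.
Qed.

Lemma divp_polyOver_Fq (p d : {poly F}) :
  p \is a polyOver Fq -> d \is a polyOver Fq -> p %/ d \is a polyOver Fq.
Proof. by rewrite !polyOver_FqE map_divp => /eqP-> /eqP->. Qed.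

Lemma TrE x : Tr x = x + fr x.
Proof. by []. Qed.

Fact Tr_is_zmod_morphism : zmod_morphism Tr.
Proof. by move=> x y; rewrite !TrE rmorphB opprD addrACA. Qed.

HB.instance Definition _ := GRing.isZmodMorphism.Build F F Tr Tr_is_zmod_morphism.

Lemma Tr_Fq x : Tr x \in Fq.
Proof. by rewrite FqE TrE rmorphD /= frobK addrC. Qed.

Lemma TrZ a x : a \in Fq -> Tr (a * x) = a * Tr x.
Proof. by rewrite FqE => /eqP fa; rewrite !TrE rmorphM /= fa mulrDr. Qed.

Lemma Tr_mul_frob x y : Tr (x * fr y) = Tr (fr x * y).
Proof. by rewrite !TrE !rmorphM /= !frobK addrC. Qed.

Lemma q_gt1 : (1 < q)%N.
Proof. by rewrite -(@ltn_exp2r _ _ 2) // exp1n -hF finNzRing_gt1. Qed.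

Section Beta.
Variable beta : F.
Hypothesis hbeta : (q ^ 2 - 1)%N.-primitive_root beta.

Lemma frob_beta_neq : fr beta != beta.
Proof.
have q1 := q_gt1; rewrite -[X in _ != X]expr1 (eq_prim_root_expr hbeta).
by rewrite !modn_small; nia.
Qed.

Lemma addrr2 (x : F) : x + x = 0.
Proof. exact: (addrr_pchar2 pchar2 x). Qed.

Lemma beta_sqr_frob_neq0 : beta ^+ 2 + fr beta ^+ 2 != 0.
Proof.
rewrite -exprDn_pchar ?(eq_pnat _ (pcharf_eq pchar2)) ?pnat_id // expf_neq0 //.
by rewrite addr_eq0 (oppr_pchar2 pchar2) eq_sym frob_beta_neq.
Qed.

Definition unTr (a b : F) : F := (a * beta + b * fr beta) / (beta ^+ 2 + fr beta ^+ 2).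

Lemma frob_unTr a b : a \in Fq -> b \in Fq -> fr (unTr a b) = unTr b a.
Proof.
rewrite !FqE => /eqP fa /eqP fb.
by rewrite /unTr !expr2 fmorph_div !rmorphD /= !rmorphM /= fa fb frobK addrC [fr beta * _ + _]addrC.
Qed.

Lemma Tr_beta_unTr a b : a \in Fq -> b \in Fq -> Tr (beta * unTr a b) = a.
Proof.
move=> Fa Fb; rewrite TrE rmorphM /= frob_unTr // /unTr !mulrA -mulrDl.
apply: (canLR (mulfK beta_sqr_frob_neq0)).
(* [ring] ignores the characteristic: the vanishing term [t + t] is supplied by hand. *)
by rewrite -[RHS]addr0 -(addrr2 (b * beta * fr beta)); ring.
Qed.

Lemma Tr_frob_beta_unTr a b : a \in Fq -> b \in Fq -> Tr (fr beta * unTr a b) = b.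
Proof.
move=> Fa Fb; rewrite TrE rmorphM /= frobK frob_unTr // /unTr !mulrA -mulrDl.
apply: (canLR (mulfK beta_sqr_frob_neq0)).
by rewrite -[RHS]addr0 -(addrr2 (a * beta * fr beta)); ring.
Qed.

Lemma unTrK w : unTr (Tr (beta * w)) (Tr (fr beta * w)) = w.
Proof.
apply: (canLR (mulfK beta_sqr_frob_neq0)).
rewrite !TrE !rmorphM /= frobK -[RHS]addr0 -(addrr2 (beta * fr beta * fr w)); ring.
Qed.

Lemma alt_termE u v :
  (beta ^+ (2 * q) - beta ^+ 2) * (u * fr v - fr u * v) =
  Tr (beta * u) * Tr (fr beta * v) + Tr (fr beta * u) * Tr (beta * v).
Proof.
rewrite mulnC exprM -[beta ^+ q]/(fr beta) !TrE !rmorphM /= frobK.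
rewrite !(oppr_pchar2 pchar2) -[LHS]addr0.
by rewrite -(addrr2 (beta * fr beta * (u * v + fr u * fr v))); ring.
Qed.

Section Length.
Variable n : nat.
Implicit Types (w : 'rV[F]_n) (x : 'rV[F]_(n + n)).

Lemma Psi_lshift w j : Psi q beta w 0 (lshift n j) = Tr (beta * w 0 j).
Proof. by rewrite row_mxEl mxE. Qed.

Lemma Psi_rshift w j : Psi q beta w 0 (rshift n j) = Tr (fr beta * w 0 j).
Proof. by rewrite row_mxEr mxE. Qed.

Lemma Psi_Fq w l : Psi q beta w 0 l \in Fq.
Proof. by case: (split_ordP l) => j ->; rewrite ?Psi_lshift ?Psi_rshift Tr_Fq. Qed.

Definition unPsi (x : 'rV[F]_(n + n)) : 'rV[F]_n :=
  \row_j unTr (x 0 (lshift n j)) (x 0 (rshift n j)).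

Lemma PsiK : cancel (@Psi F q beta n) unPsi.
Proof. by move=> w; apply/rowP => j; rewrite mxE Psi_lshift Psi_rshift unTrK. Qed.

Lemma unPsiK x : (forall l, x 0 l \in Fq) -> Psi q beta (unPsi x) = x.
Proof.
move=> Fx; apply/rowP => l; case: (split_ordP l) => j ->.
  by rewrite Psi_lshift mxE Tr_beta_unTr.
by rewrite Psi_rshift mxE Tr_frob_beta_unTr.
Qed.

Lemma tauK : involutive (@tau F n).
Proof.
move=> x; rewrite /tau row_mxKr row_mxKl -opp_row_mx hsubmxK.
by apply/rowP => l; rewrite mxE (oppr_pchar2 pchar2).
Qed.

Lemma tau_Fq x : (forall l, x 0 l \in Fq) -> forall l, tau x 0 l \in Fq.
Proof.
by move=> Fx l; case: (split_ordP l) => j ->; rewrite ?row_mxEl ?row_mxEr !mxE ?rpredN.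
Qed.

Lemma tau_Psi_lshift w j : tau (Psi q beta w) 0 (lshift n j) = Tr (fr beta * w 0 j).
Proof. by rewrite row_mxEl mxE (oppr_pchar2 pchar2) mxE Psi_rshift. Qed.

Lemma tau_Psi_rshift w j : tau (Psi q beta w) 0 (rshift n j) = Tr (beta * w 0 j).
Proof. by rewrite row_mxEr mxE Psi_lshift. Qed.

Definition tauPsi_poly (w : 'rV[F]_n) : {poly F} := rVpoly (tau (Psi q beta w)).

Lemma coef_tauPsi_poly_lo w (j : 'I_n) : (tauPsi_poly w)`_j = Tr (fr beta * w 0 j).
Proof. by rewrite -[j : nat]/(lshift n j : nat) coef_rVpoly_ord tau_Psi_lshift. Qed.

Lemma coef_tauPsi_poly_hi w (j : 'I_n) : (tauPsi_poly w)`_(n + j) = Tr (beta * w 0 j).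
Proof. by rewrite -[(n + j)%N]/(rshift n j : nat) coef_rVpoly_ord tau_Psi_rshift. Qed.

Lemma size_tauPsi_poly w : (size (tauPsi_poly w) <= n + n)%N.
Proof. exact: size_poly. Qed.

Lemma tauPsi_poly_Fq w : tauPsi_poly w \is a polyOver Fq.
Proof.
apply/polyOverP => i; rewrite coef_rVpoly; case: insub => [l|]; last exact: rpred0.
exact: tau_Fq (Psi_Fq w) l.
Qed.

Lemma tauPsi_poly_inj : injective tauPsi_poly.
Proof.
move=> w w' /(congr1 (@poly_rV _ (n + n))); rewrite !rVpolyK => /(congr1 (@tau F n)).
by rewrite !tauK => /(congr1 unPsi); rewrite !PsiK.
Qed.

Lemma tauPsi_poly0 : tauPsi_poly 0 = 0.
Proof.
rewrite /tauPsi_poly; have -> : Psi q beta (0 : 'rV_n) = 0.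
  apply/rowP => l; case: (split_ordP l) => j ->.
    by rewrite Psi_lshift !mxE mulr0 raddf0.
  by rewrite Psi_rshift !mxE mulr0 raddf0.
by rewrite /tau !linear0 row_mx0 linear0.
Qed.

Lemma tauPsi_poly_sum k (a : 'I_k -> F) (w : 'I_k -> 'rV[F]_n) :
  (forall i, a i \in Fq) ->
  tauPsi_poly (\sum_(i < k) a i *: w i) = \sum_(i < k) a i *: tauPsi_poly (w i).
Proof.
move=> Fa; rewrite /tauPsi_poly; under [RHS]eq_bigr do rewrite -linearZ.
rewrite -linear_sum; congr rVpoly; apply/rowP => l; rewrite summxE.
case: (split_ordP l) => j ->;
  rewrite ?tau_Psi_lshift ?tau_Psi_rshift summxE mulr_sumr raddf_sum /=;
  apply: eq_bigr => i _;
  by rewrite [in RHS]mxE mxE mulrCA TrZ ?tau_Psi_lshift ?tau_Psi_rshift.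
Qed.

Lemma val_ord_pred (j : 'I_n) :
  (ord_pred j : nat) = if (j : nat) == 0%N then n.-1 else (j : nat).-1.
Proof.
case: j => [[|j] lt_j] /=; first by rewrite add0n modn_small // prednK.
by rewrite modnDr modn_small // ltnW.
Qed.

Lemma tauPsi_poly_Tmap w : (size (tauPsi_poly w) < n + n)%N ->
  tauPsi_poly (Tmap q w) = 'X * tauPsi_poly w.
Proof.
move=> size_lt; apply/polyP => l; rewrite coefXM.
have [lN | Nl] := ltnP l (n + n); last first.
  rewrite nth_default ?(leq_trans (size_tauPsi_poly _)) //.
  have l_gt0 : (0 < l)%N by lia.
  case: eqP => // _; rewrite nth_default //.
  by rewrite -ltnS (ltn_predK l_gt0) (leq_trans size_lt).
have top0 : (tauPsi_poly w)`_(n + n).-1 = 0.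
  by rewrite nth_default // -ltnS prednK // (leq_ltn_trans _ size_lt).
case: (split_ordP (Ordinal lN)) => j /(congr1 val) /= ->; have := ltn_ord j.
  rewrite coef_tauPsi_poly_lo mxE; case: eqP => [j0 | /eqP j_neq0] j_lt_n.
    rewrite Tr_mul_frob frobK -coef_tauPsi_poly_hi val_ord_pred j0 /= -[RHS]top0.
    by congr (nth _ _ _); lia.
  by rewrite -coef_tauPsi_poly_lo val_ord_pred (negbTE j_neq0).
rewrite coef_tauPsi_poly_hi mxE addn_eq0; case: eqP => [j0 | /eqP j_neq0] j_lt_n.
  rewrite andbT (gtn_eqF (leq_ltn_trans (leq0n _) j_lt_n)).
  rewrite Tr_mul_frob -coef_tauPsi_poly_lo val_ord_pred j0 /=.
  by congr (nth _ _ _); lia.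
rewrite andbF -coef_tauPsi_poly_hi val_ord_pred (negbTE j_neq0).
by congr (nth _ _ _); lia.
Qed.

Lemma tauPsi_poly_iter_Tmap w i : (size (tauPsi_poly w) + i <= n + n)%N ->
  tauPsi_poly (iter i (@Tmap F q n) w) = 'X^i * tauPsi_poly w.
Proof.
elim: i => [|i IH] size_le; first by rewrite expr0 mul1r.
rewrite iterS tauPsi_poly_Tmap IH ?exprS ?mulrA //; try lia.
rewrite (leq_ltn_trans (size_polyMleq _ _)) // size_polyXn; lia.
Qed.

Lemma alt_ip_pdot u v :
  alt_ip q beta u v = pdot (n + n) (rVpoly (Psi q beta u)) (tauPsi_poly v).
Proof.
rewrite /alt_ip mulr_sumr /pdot big_split_ord /= -big_split /=.
apply: eq_bigr => j _.
rewrite -[j : nat]/(lshift n j : nat) -[(n + j)%N]/(rshift n j : nat) !coef_rVpoly_ord.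
by rewrite Psi_lshift Psi_rshift tau_Psi_lshift tau_Psi_rshift alt_termE.
Qed.

Section Code.
Variables (k : nat) (g : {poly F}).
Hypotheses (n_gt0 : (0 < n)%N) (hgF : g \is a polyOver Fq) (g_monic : g \is monic).
Hypotheses (size_g : size g = k.+1) (g_dvd : g %| 'X^(n + n) - 1).

Local Notation N := (n + n)%N.
Local Notation h := (('X^N - 1) %/ g).
Local Notation hs := (revp h).
Local Notation C := (fun u : 'rV[F]_n => cyclic_code q g (Psi q beta u)).

Let N_gt0 : (0 < N)%N. Proof. by rewrite addn_gt0 n_gt0. Qed.

Lemma cyclic_code_dvdp (c : 'rV[F]_N) : cyclic_code q g c -> g %| rVpoly c.
Proof. by case=> _ [a [_ ->]]; rewrite -dvdp_mod // dvdp_mull. Qed.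

Lemma cyclic_code_Xn_mul_g j :
  (j < N - k)%N -> cyclic_code q g (poly_rV ('X^j * g) : 'rV_N).
Proof.
move=> jNk; have Xg_Fq : 'X^j * g \is a polyOver Fq by rewrite rpredM ?polyOverXn.
have size_Xg := size_Xn_mul_g g_monic size_g j.
split=> [l|]; first by rewrite mxE (polyOverP Xg_Fq).
exists 'X^j; rewrite polyOverXn poly_rV_K ?modp_small ?size_Xn_sub_1 ?size_Xg //; lia.
Qed.

Lemma revp_h_Fq : hs \is a polyOver Fq.
Proof. by apply/polyOver_revp/divp_polyOver_Fq; rewrite ?rpredB ?polyOverXn ?rpred1. Qed.

Lemma exists_Psi_eq_tau_recip :
  exists W, Psi q beta W = tau (\row_(i < N) (recip h)`_i).
Proof.
exists (unPsi (tau (\row_(i < N) (recip h)`_i))); apply/unPsiK/tau_Fq => l.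
by rewrite mxE recip_monic ?h_monic //; apply: (polyOverP revp_h_Fq).
Qed.

Section Basis.
Variable W : 'rV[F]_n.
Hypothesis HW : Psi q beta W = tau (\row_(i < N) (recip h)`_i).

Lemma tauPsi_poly_iter_W i :
  (i < k)%N -> tauPsi_poly (iter i (@Tmap F q n) W) = 'X^i * hs.
Proof.
move=> ik; have kN := k_leq_N N_gt0 size_g g_dvd.
have size_hs := size_revp_h N_gt0 g_monic size_g g_dvd.
have W_hs : tauPsi_poly W = hs.
  rewrite /tauPsi_poly HW tauK recip_monic ?h_monic //.
  by apply: poly_rV_K; rewrite size_hs; lia.
by rewrite tauPsi_poly_iter_Tmap W_hs // size_hs; lia.
Qed.

Lemma tauPsi_poly_comb_W (a : 'I_k -> F) : (forall i, a i \in Fq) ->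
  tauPsi_poly (\sum_(i < k) a i *: iter i (@Tmap F q n) W) = rVpoly (\row_i a i) * hs.
Proof.
move=> Fa; rewrite tauPsi_poly_sum // rVpoly_sumXn mulr_suml.
by apply: eq_bigr => i _; rewrite tauPsi_poly_iter_W // mxE scalerAl.
Qed.

Lemma iter_Tmap_free (a : 'I_k -> F) : (forall i, a i \in Fq) ->
  \sum_(i < k) a i *: iter i (@Tmap F q n) W = 0 -> forall i, a i = 0.
Proof.
move=> Fa /(congr1 tauPsi_poly); rewrite tauPsi_poly_comb_W // tauPsi_poly0.
move/eqP; rewrite mulf_eq0 (negbTE (revp_h_neq0 N_gt0 g_monic size_g g_dvd)) orbF.
move=> /eqP/(congr1 (@poly_rV _ k)); rewrite rVpolyK linear0 => /rowP a0 i.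
by move: (a0 i); rewrite !mxE.
Qed.

Lemma alt_dual_pdot_Xn_g v : alt_dual q beta C v ->
  forall j, (j < N - k)%N -> pdot N ('X^j * g) (tauPsi_poly v) = 0.
Proof.
move=> v_dual j jNk; have code_Xg := cyclic_code_Xn_mul_g jNk; have [Fx _] := code_Xg.
rewrite -(poly_rV_K (d := N) (p := 'X^j * g)); last first.
  by rewrite (size_Xn_mul_g g_monic size_g); lia.
by rewrite -(unPsiK Fx) -alt_ip_pdot; apply: v_dual; rewrite /= (unPsiK Fx).
Qed.

Lemma alt_dual_span_iter_Tmap v : alt_dual q beta C v <->
  exists a : 'I_k -> F,
    (forall i, a i \in Fq) /\ v = \sum_(i < k) a i *: iter i (@Tmap F q n) W.
Proof.
split => [v_dual | [a [Fa ->]] u /cyclic_code_dvdp gu]; last first.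
  rewrite alt_ip_pdot tauPsi_poly_comb_W //.
  by rewrite (pdot_revp_h N_gt0 g_monic size_g g_dvd) ?size_poly.
set Y := tauPsi_poly v.
have size_Y := size_tauPsi_poly v.
have YA : Y %/ hs * hs = Y.
  exact: revp_h_divpK N_gt0 g_monic size_g g_dvd _ size_Y (alt_dual_pdot_Xn_g v_dual).
have A_Fq : Y %/ hs \is a polyOver Fq := divp_polyOver_Fq (tauPsi_poly_Fq v) revp_h_Fq.
exists (fun i => (Y %/ hs)`_i); split => [i|]; first exact: (polyOverP A_Fq).
apply: tauPsi_poly_inj; rewrite tauPsi_poly_comb_W => [|i]; last exact: (polyOverP A_Fq).
by rewrite [rVpoly _](poly_rV_K (size_divp_revp_h N_gt0 g_monic size_g g_dvd size_Y)) YA.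
Qed.

Lemma iter_Tmap_Fq_basis :
  Fq_basis q (fun i : 'I_k => iter i (@Tmap F q n) W) (alt_dual q beta C).
Proof. by split; [exact: iter_Tmap_free | exact: alt_dual_span_iter_Tmap]. Qed.

End Basis.
End Code.
End Length.
End Beta.
End Fq2.

Theorem theorem4p6 (F : finFieldType) (q m : nat) (beta : F) (n : nat)
    (g : {poly F})
    (hq : q = (2 ^ m)%N) (hF : #|F| = (q ^ 2)%N)
    (hbeta : (q ^ 2 - 1)%N.-primitive_root beta)
    (hn : (0 < n)%N)
    (hgF : g \is a polyOver (Fq q)) (hgmon : g \is monic)
    (hgdiv : g %| 'X^(n + n) - 1) (hgne : g != 'X^(n + n) - 1) :
  let k := (size g).-1 in
  let h := ('X^(n + n) - 1) %/ g in
  let V : 'rV[F]_(n + n) := \row_(i < n + n) (recip h)`_i in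
  let C := fun a : 'rV[F]_n => cyclic_code q g (Psi q beta a) in
  (exists W : 'rV[F]_n, Psi q beta W = tau V) /\
  (forall W : 'rV[F]_n, Psi q beta W = tau V ->
     Fq_basis q (fun i : 'I_k => iter i (@Tmap F q n) W) (alt_dual q beta C)).
Proof.
move=> k h V C.
have size_g : size g = k.+1 by rewrite prednK // size_poly_gt0 monic_neq0.
split; first exact (exists_Psi_eq_tau_recip hq hF hbeta hn hgF hgmon hgdiv).
move=> W HW; exact (iter_Tmap_Fq_basis hq hF hbeta hn hgF hgmon size_g hgdiv HW).
Qed.
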